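(* In the setting of the joint threshold-based policy in which $D$ knows that $S$ uses this policy with threshold $P_S$, the per-slot success probability $\phi(P_S)=[1-p(P_{tx})]\,\Psi(P_S,P_D)$ is maximized over $P_S>P_{C,S}$ by the threshold $P_S^*>P_{C,S}$ satisfying $$\exp\Big[-\frac{(2^R-1)(1+\alpha)z}{P_S^*-P_{C,S}}\Big]=\frac{\lambda_S}{P_S^*}.$$
   Context: Parameters: rate $R>0$, noise $z>0$, $\alpha>0$, circuit power $P_{C,S}\ge0$, energy arrival means $\lambda_S,\lambda_D>0$, receive energy $P_D>0$. For threshold $P_S>P_{C,S}$, $P_{tx}=(P_S-P_{C,S})/(1+\alpha)$ and $p(P_{tx})=1-\exp(-(2^R-1)z/P_{tx})$. Under the joint threshold-based policy where $D$ knows $S$'s policy (both nodes act in a slot iff $B_S^t\ge P_S$, $B_D^t\ge P_D$ and the channel is not in outage; infinite batteries, stationary ergodic energy arrivals), the simultaneous activity probability is $\Psi(P_S,P_D)=\min\big(1,\frac{\lambda_S}{[1-p(P_{tx})]P_S},\frac{\lambda_D}{[1-p(P_{tx})]P_D}\big)$. *)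

From Stdlib Require Import Reals.
Open Scope R_scope.

(* Rate is called [Rt] to avoid clashing with the type [R]. *)

Definition Ptx (alpha PCS PS : R) : R := (PS - PCS) / (1 + alpha).

Definition pout (Rt z P : R) : R := 1 - exp (- ((Rpower 2 Rt - 1) * z / P)).

Definition Psi (Rt z alpha PCS lamS lamD PS PD : R) : R :=
  let q := 1 - pout Rt z (Ptx alpha PCS PS) in
  Rmin 1 (Rmin (lamS / (q * PS)) (lamD / (q * PD))).

Definition phi (Rt z alpha PCS lamS lamD PD PS : R) : R :=
  (1 - pout Rt z (Ptx alpha PCS PS)) * Psi Rt z alpha PCS lamS lamD PS PD.

Definition opt_eq (Rt z alpha PCS lamS PS : R) : Prop :=
  exp (- ((Rpower 2 Rt - 1) * (1 + alpha) * z / (PS - PCS))) = lamS / PS.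

From Stdlib Require Import Reals Lra.
Open Scope R_scope.

(* Writing [c = (2^R - 1)(1 + alpha) z], the non-outage probability is
   [e(P) = exp (-c / (P - P_{C,S}))] and the factor [1 - p] cancels in [phi],
   so [phi(P) = min (e(P), lamS / P, lamD / P_D)].  Since [e] increases and
   [lamS / P] decreases, the minimum of the first two terms is largest where
   they cross, and the crossing exists by the intermediate value theorem:
   [e] is below [lamS / P] near [P_{C,S}] and tends to [1] at infinity. *)

Definition nonoutage (c P0 P : R) : R := exp (- (c / (P - P0))).

Lemma Rmult_Rmin_distr_l r x y : 0 < r -> r * Rmin x y = Rmin (r * x) (r * y).
Proof.
  intros Hr; destruct (Rle_dec x y) as [Hxy | Hxy].
  - rewrite !Rmin_left; [reflexivity | apply Rmult_le_compat_l |]; lra.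
  - rewrite !Rmin_right; [reflexivity | apply Rmult_le_compat_l |]; lra.
Qed.

Lemma Rmin_incr_decr_le_crossing (D : R -> Prop) (f g : R -> R) xs x :
  (forall u v, D u -> D v -> u <= v -> f u <= f v) ->
  (forall u v, D u -> D v -> u <= v -> g v <= g u) ->
  D xs -> D x -> f xs = g xs -> Rmin (f x) (g x) <= f xs.
Proof.
  intros Hf Hg Dxs Dx Hcross; destruct (Rle_dec x xs) as [Hle | Hgt].
  - apply (Rle_trans _ (f x)); [apply Rmin_l | auto].
  - rewrite Hcross; apply (Rle_trans _ (g x)); [apply Rmin_r | apply Hg; auto; lra].
Qed.

Lemma exp_neg_lt_inv x : 0 < x -> exp (- x) < / x.
Proof.
  intros Hx; rewrite exp_Ropp; apply Rinv_lt_contravar.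
  - apply Rmult_lt_0_compat; [exact Hx | apply exp_pos].
  - pose proof (exp_ineq1 x); lra.
Qed.

Lemma Rpower2_gt1 Rt : 0 < Rt -> 1 < Rpower 2 Rt.
Proof. intros H; rewrite <- (Rpower_O 2) by lra; apply Rpower_lt; lra. Qed.

Lemma phi_nonoutage_min Rt z alpha PCS lamS lamD PD PS :
  0 < alpha -> PCS < PS -> 0 <= PCS -> 0 < PD ->
  phi Rt z alpha PCS lamS lamD PD PS =
  Rmin (Rmin (nonoutage ((Rpower 2 Rt - 1) * (1 + alpha) * z) PCS PS) (lamS / PS))
       (lamD / PD).
Proof.
  intros ha hP hPC hPD; rewrite <- Rmin_assoc.
  unfold phi, Psi, pout, Ptx, nonoutage.
  replace ((Rpower 2 Rt - 1) * z / ((PS - PCS) / (1 + alpha)))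
    with ((Rpower 2 Rt - 1) * (1 + alpha) * z / (PS - PCS)) by (field; lra).
  set (q := exp (- ((Rpower 2 Rt - 1) * (1 + alpha) * z / (PS - PCS)))).
  assert (Hq : 0 < q) by apply exp_pos.
  replace (1 - (1 - q)) with q by ring.
  rewrite !Rmult_Rmin_distr_l by exact Hq.
  f_equal; [ring |]; f_equal; field; lra.
Qed.

Section Crossing.

Variables c P0 lam : R.
Hypotheses (hc : 0 < c) (hP0 : 0 <= P0) (hlam : 0 < lam).

Lemma nonoutage_le P Q : P0 < P -> P <= Q -> nonoutage c P0 P <= nonoutage c P0 Q.
Proof.
  intros HP HPQ; unfold nonoutage.
  destruct (Rle_lt_or_eq _ _ HPQ) as [Hlt | ->]; [left | right; reflexivity].
  apply exp_increasing, Ropp_lt_contravar, Rmult_lt_compat_l; [lra |].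
  apply Rinv_lt_contravar; nra.
Qed.

Lemma ratio_le P Q : 0 < P -> P <= Q -> lam / Q <= lam / P.
Proof.
  intros HP HPQ; apply Rmult_le_compat_l; [lra |]; apply Rinv_le_contravar; lra.
Qed.

Lemma nonoutage_lt_ratio_near t :
  0 < t -> t <= 1 -> t * (P0 + 1) <= lam * c -> nonoutage c P0 (P0 + t) < lam / (P0 + t).
Proof.
  intros Ht0 Ht1 Hsmall; unfold nonoutage; replace (P0 + t - P0) with t by ring.
  (* [exp (-c/t) < t/c], and [t/c <= lam/(P0 + t)] for small [t] *)
  apply (Rlt_le_trans _ (t / c)).
  - replace (t / c) with (/ (c / t)) by (field; lra).
    apply exp_neg_lt_inv, Rdiv_lt_0_compat; lra.
  - apply (Rmult_le_reg_r (c * (P0 + t))); [nra |].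
    field_simplify; nra.
Qed.

Lemma ratio_lt_nonoutage_far t : c + lam < t -> lam / (P0 + t) < nonoutage c P0 (P0 + t).
Proof.
  intros Ht; unfold nonoutage; replace (P0 + t - P0) with t by ring.
  (* [lam/(P0 + t) <= lam/t < 1 - c/t <= exp (-c/t)] *)
  pose proof (exp_ineq1_le (- (c / t))) as Hexp.
  assert (Hlt : lam / t < 1 - c / t).
  { apply (Rmult_lt_reg_r t); [lra |]; field_simplify; lra. }
  pose proof (ratio_le t (P0 + t)); lra.
Qed.

Lemma nonoutage_ratio_crossing : exists P, P0 < P /\ nonoutage c P0 P = lam / P.
Proof.
  set (g := fun P => nonoutage c P0 P - lam / P).
  set (ta := Rmin 1 (lam * c / (P0 + 1))).
  set (tb := c + lam + 1).
  assert (Hta : 0 < ta).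
  { apply Rmin_glb_lt; [lra |]; apply Rdiv_lt_0_compat; [apply Rmult_lt_0_compat |]; lra. }
  assert (Hta1 : ta <= 1) by apply Rmin_l.
  assert (Hsmall : ta * (P0 + 1) <= lam * c).
  { apply (Rle_trans _ (lam * c / (P0 + 1) * (P0 + 1))).
    - apply Rmult_le_compat_r; [lra | apply Rmin_r].
    - right; field; lra. }
  destruct (Ranalysis5.IVT_interv g (P0 + ta) (P0 + tb)) as [P [HP HgP]].
  - intros a Ha; unfold g, nonoutage; reg; lra.
  - unfold tb; lra.
  - unfold g; pose proof (nonoutage_lt_ratio_near ta); lra.
  - unfold g; pose proof (ratio_lt_nonoutage_far tb); unfold tb in *; lra.
  - exists P; unfold g in HgP; split; lra.
Qed.

Lemma Rmin_nonoutage_ratio_le_crossing Ps P :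
  P0 < Ps -> P0 < P -> nonoutage c P0 Ps = lam / Ps ->
  Rmin (nonoutage c P0 P) (lam / P) <= nonoutage c P0 Ps.
Proof.
  apply (Rmin_incr_decr_le_crossing (fun P => P0 < P) (nonoutage c P0) (fun P => lam / P)).
  - intros u v Hu _; apply nonoutage_le, Hu.
  - intros u v Hu _; apply ratio_le; lra.
Qed.

End Crossing.

Theorem corollary4 (Rt z alpha PCS lamS lamD PD : R)
  (hR : 0 < Rt) (hz : 0 < z) (ha : 0 < alpha) (hPC : 0 <= PCS)
  (hlS : 0 < lamS) (hlD : 0 < lamD) (hPD : 0 < PD) :
  (exists PSs, PCS < PSs /\ opt_eq Rt z alpha PCS lamS PSs) /\
  (forall PSs, PCS < PSs -> opt_eq Rt z alpha PCS lamS PSs ->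
     forall PS, PCS < PS ->
       phi Rt z alpha PCS lamS lamD PD PS <= phi Rt z alpha PCS lamS lamD PD PSs).
Proof.
  set (c := (Rpower 2 Rt - 1) * (1 + alpha) * z).
  assert (hc : 0 < c).
  { pose proof (Rpower2_gt1 Rt hR).
    unfold c; apply Rmult_lt_0_compat; [apply Rmult_lt_0_compat |]; lra. }
  split.
  - exact (nonoutage_ratio_crossing c PCS lamS hc hPC hlS).
  - intros PSs HPSs Hopt PS HPS.
    rewrite !phi_nonoutage_min by lra; fold c.
    apply Rle_min_compat_r.
    assert (Hcross : nonoutage c PCS PSs = lamS / PSs) by exact Hopt.
    rewrite Hcross, (Rmin_left (lamS / PSs)), <- Hcross by lra.
    apply (Rmin_nonoutage_ratio_le_crossing c PCS lamS); assumption.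
Qed.
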